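(* For a right $R$-module $M$ the following are equivalent: (a) $M$ is a finite $\Sigma$-Rickart module; (b) every finitely $M$-generated submodule of any module in $\mathrm{add}(M)$ satisfies the $D_2$ condition.
   Context: Modules are unitary right $R$-modules; $M^{(n)}$ is the direct sum of $n$ copies of $M$. $M$ is Rickart if $\ker\varphi$ is a direct summand of $M$ for all $\varphi\in\mathrm{End}_R(M)$; $M$ is finite $\Sigma$-Rickart if $M^{(n)}$ is Rickart for all $n>0$. $\mathrm{add}(M)$ is the class of modules isomorphic to a direct summand of $M^{(n)}$ for some integer $n>0$. A module $N$ is finitely $M$-generated if there is an epimorphism $M^{(n)}\to N$ for some $n>0$. A module $X$ satisfies the $D_2$ condition if for every submodule $Y\le X$ such that $X/Y$ is isomorphic to a direct summand of $X$, $Y$ is a direct summand of $X$. *)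

(* Right R-modules are represented as left modules over the
   converse ring R^c (lmodType R^c). *)
From mathcomp Require Import all_boot all_algebra.
Set Implicit Arguments. Unset Strict Implicit. Unset Printing Implicit Defensive.
Import GRing.Theory.
Local Open Scope ring_scope.

Section ModuleNotions.
Variable S : nzRingType.

Definition is_submodule (V : lmodType S) (A : V -> Prop) : Prop :=
  A 0 /\ (forall x y, A x -> A y -> A (x + y)) /\
  (forall (a : S) x, A x -> A (a *: x)).

Definition is_direct_summand (V : lmodType S) (A : V -> Prop) : Prop :=
  is_submodule A /\
  exists B : V -> Prop, is_submodule B /\
    (forall v, A v -> B v -> v = 0) /\
    (forall v, exists a b, A a /\ B b /\ v = a + b).

Definition lker (U V : lmodType S) (f : {linear U -> V}) : U -> Prop :=
  fun u => f u = 0.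

Definition limage (U V : lmodType S) (f : {linear U -> V}) : V -> Prop :=
  fun v => exists u, f u = v.

Definition Rickart (M : lmodType S) : Prop :=
  forall phi : {linear M -> M}, is_direct_summand (lker phi).

Definition dsum_pow (M : lmodType S) (n : nat) : lmodType S :=
  {ffun 'I_n -> M}.

Definition finite_Sigma_Rickart (M : lmodType S) : Prop :=
  forall n : nat, (0 < n)%N -> Rickart (dsum_pow M n).

Definition iso_to_direct_summand (Q N : lmodType S) : Prop :=
  exists h : {linear Q -> N}, injective h /\ is_direct_summand (limage h).

Definition in_add (M X : lmodType S) : Prop :=
  exists n : nat, (0 < n)%N /\ iso_to_direct_summand X (dsum_pow M n).

Definition fin_M_generated (M N : lmodType S) : Prop :=
  exists n : nat, (0 < n)%N /\
    exists g : {linear dsum_pow M n -> N}, forall y, exists x, g x = y.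

(* The quotient X/Y is
   represented (up to isomorphism) by any module Q together with an
   epimorphism X -> Q whose kernel is Y. *)
Definition D2 (X : lmodType S) : Prop :=
  forall Y : X -> Prop, is_submodule Y ->
    (exists (Q : lmodType S) (q : {linear X -> Q}),
        (forall w, exists x, q x = w) /\ (forall x, Y x <-> q x = 0) /\
        iso_to_direct_summand Q X) ->
    is_direct_summand Y.

End ModuleNotions.

(* (a) => (b).  Let g : M^(k) -> N be onto and Y <= N with N/Y isomorphic to a
   direct summand of N <= X <= M^(m).  Composing the quotient map with these
   embeddings gives f : M^(k) -> M^(m) whose kernel is g^-1(Y).  Since
   M^(k+m) is Rickart, the kernel of any map M^(k) -> M^(m) is a direct
   summand, and the image of a summand of the form g^-1(Y) under the
   epimorphism g is a summand; hence Y is a summand of N.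

   (b) => (a).  For phi in End(M^(n)) take N = M^(n) (+) Im phi <= M^(2n).
   N is an image of M^(2n); its submodule Y = Ker phi (+) Im phi has quotient
   Im phi, which is a direct summand of N (split by the second projection).
   D2 makes Y a summand of N, and projecting onto the first factor shows that
   Ker phi is a summand of M^(n). *)
From HB Require Import structures.
From mathcomp Require Import all_boot ssralg.
From mathcomp Require Import boolp.
Import GRing.Theory.
Local Open Scope ring_scope.
Set Implicit Arguments. Unset Strict Implicit. Unset Printing Implicit Defensive.

Section SubmoduleAsModule.
Variables (S : nzRingType) (V : lmodType S) (P : V -> Prop).
Hypothesis HP : is_submodule P.

(* Boolean membership in P; the unused argument keys the closure instance
   below on the proof HP. *)
Definition submem of is_submodule P : {pred V} := fun v => `[< P v >].

Fact submem_closed : GRing.submod_closed (submem HP).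
Proof.
case: HP => P0 [PD PZ]; split; first exact/asboolP.
by move=> a u v /asboolP Pu /asboolP Pv; apply/asboolP; apply: PD => //; apply: PZ.
Qed.

HB.instance Definition _ := GRing.isSubmodClosed.Build S V (submem HP) submem_closed.
Definition submod : Type := {x : V | x \in submem HP}.
HB.instance Definition _ := [isSub for (@proj1_sig V _ : submod -> V)].
HB.instance Definition _ := [Choice of submod by <:].
HB.instance Definition _ := [SubChoice_isSubLmodule of submod by <:].

Lemma submodP (x : submod) : P (val x).
Proof. exact/asboolP/(valP x). Qed.

Variables (U : lmodType S) (f : {linear U -> V}).
Hypothesis fP : forall u, P (f u).

Definition corestrict (u : U) : submod := Sub (f u) (asboolT (fP u)).

Lemma corestrictK u : val (corestrict u) = f u.
Proof. exact: SubK. Qed.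

Fact corestrict_is_linear : linear corestrict.
Proof. by move=> a u v; apply: val_inj; rewrite [RHS]linearP /= linearP. Qed.

HB.instance Definition _ :=
  GRing.isLinear.Build S U submod *:%R corestrict corestrict_is_linear.
End SubmoduleAsModule.

Section DirectSummands.
Variable S : nzRingType.
Implicit Types U V W : lmodType S.

Lemma lker_submodule U V (f : {linear U -> V}) : is_submodule (lker f).
Proof.
rewrite /lker; split; first exact: linear0.
split=> [x y fx fy | a x fx]; first by rewrite linearD fx fy addr0.
by rewrite linearZ_LR fx scaler0.
Qed.

Lemma limage_submodule U V (f : {linear U -> V}) : is_submodule (limage f).
Proof.
split; first by exists 0; rewrite linear0.
split=> [_ _ [x <-] [y <-] | a _ [x <-]]; first by exists (x + y); rewrite linearD.
by exists (a *: x); rewrite linearZ_LR.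
Qed.

Lemma preimage_submodule U V (f : {linear U -> V}) (Y : V -> Prop) :
  is_submodule Y -> is_submodule (fun u => Y (f u)).
Proof.
move=> [Y0 [YD YZ]]; split; first by rewrite linear0.
by split=> [x y Yx Yy | a x Yx]; rewrite ?linearD ?linearZ_LR; [apply: YD | apply: YZ].
Qed.

Lemma image_submodule U V (f : {linear U -> V}) (C : U -> Prop) :
  is_submodule C -> is_submodule (fun v => exists c, C c /\ f c = v).
Proof.
move=> [C0 [CD CZ]]; split; first by exists 0; rewrite linear0.
split=> [_ _ [c [Cc <-]] [d [Cd <-]] | a _ [c [Cc <-]]].
  by exists (c + d); rewrite linearD; split=> //; apply: CD.
by exists (a *: c); rewrite linearZ_LR; split=> //; apply: CZ.
Qed.

(* If the preimage of a submodule Y under an epimorphism g is a direct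
   summand, so is Y: the image of a complement of g^-1(Y) complements Y. *)
Lemma summand_image U V (g : {linear U -> V}) (Y : V -> Prop) (K : U -> Prop) :
  (forall v, exists u, g u = v) -> is_submodule Y ->
  (forall u, K u <-> Y (g u)) -> is_direct_summand K -> is_direct_summand Y.
Proof.
move=> g_onto HY KY [_ [C [HC [KC0 KCsum]]]]; split=> //.
exists (fun v => exists c, C c /\ g c = v); split; first exact: image_submodule.
split=> [v Yv [c [Cc gc]] | v].
  by rewrite -gc (KC0 c) ?linear0 // KY gc.
have [u <-] := g_onto v; have [a [c [Ka [Cc ->]]]] := KCsum u.
exists (g a), (g c); split; first exact/KY.
by split; [exists c | rewrite linearD].
Qed.

(* Splitting lemma: if p is a left inverse of h, then Im h is a direct summand
   with complement Ker p. *)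
Lemma split_summand U V (h : {linear U -> V}) (p : {linear V -> U}) :
  cancel h p -> is_direct_summand (limage h).
Proof.
move=> hK; split; first exact: limage_submodule.
exists (lker p); split; first exact: lker_submodule.
split=> [_ [u <-] | v]; first by rewrite /lker hK => ->; rewrite linear0.
exists (h (p v)), (v - h (p v)); split; first by exists (p v).
by rewrite /lker linearB /= hK subrr addrC subrK.
Qed.

Lemma iso_to_direct_summand_refl V : iso_to_direct_summand V V.
Proof. by exists idfun; split; [exact: inj_id | apply: (@split_summand _ _ _ idfun)]. Qed.

Lemma lin_eq0 U V (f : {linear U -> V}) x : injective f -> (f x = 0 <-> x = 0).
Proof. by move=> f_inj; split=> [fx0 | ->]; [apply: f_inj; rewrite fx0 linear0 | exact: linear0]. Qed.
End DirectSummands.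

Section PowerBlocks.
Variables (S : nzRingType) (M : lmodType S) (k m : nat).

Definition dleft (x : dsum_pow M (k + m)) : dsum_pow M k := [ffun i => x (lshift m i)].
Definition dright (x : dsum_pow M (k + m)) : dsum_pow M m := [ffun i => x (rshift k i)].
Definition dinl (a : dsum_pow M k) : dsum_pow M (k + m) :=
  [ffun i => if split i is inl j then a j else 0].
Definition dinr (b : dsum_pow M m) : dsum_pow M (k + m) :=
  [ffun i => if split i is inr j then b j else 0].

Fact dleft_is_linear : linear dleft. Proof. by move=> a x y; apply/ffunP=> i; rewrite !ffunE. Qed.
Fact dright_is_linear : linear dright. Proof. by move=> a x y; apply/ffunP=> i; rewrite !ffunE. Qed.
Fact dinl_is_linear : linear dinl.
Proof. by move=> a x y; apply/ffunP=> i; rewrite !ffunE; case: split => j; rewrite ?ffunE ?scaler0 ?addr0. Qed.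
Fact dinr_is_linear : linear dinr.
Proof. by move=> a x y; apply/ffunP=> i; rewrite !ffunE; case: split => j; rewrite ?ffunE ?scaler0 ?addr0. Qed.

HB.instance Definition _ := GRing.isLinear.Build S _ _ *:%R dleft dleft_is_linear.
HB.instance Definition _ := GRing.isLinear.Build S _ _ *:%R dright dright_is_linear.
HB.instance Definition _ := GRing.isLinear.Build S _ _ *:%R dinl dinl_is_linear.
HB.instance Definition _ := GRing.isLinear.Build S _ _ *:%R dinr dinr_is_linear.

Lemma dleft_inl a : dleft (dinl a) = a.
Proof. by apply/ffunP=> i; rewrite !ffunE (unsplitK (inl _ i)). Qed.
Lemma dleft_inr b : dleft (dinr b) = 0.
Proof. by apply/ffunP=> i; rewrite !ffunE (unsplitK (inl _ i)). Qed.
Lemma dright_inl a : dright (dinl a) = 0.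
Proof. by apply/ffunP=> i; rewrite !ffunE (unsplitK (inr _ i)). Qed.
Lemma dright_inr b : dright (dinr b) = b.
Proof. by apply/ffunP=> i; rewrite !ffunE (unsplitK (inr _ i)). Qed.
Lemma dsum_decomp x : dinl (dleft x) + dinr (dright x) = x.
Proof.
by apply/ffunP=> i; rewrite !ffunE; case: split_ordP => j ->; rewrite ffunE ?addr0 ?add0r.
Qed.
End PowerBlocks.
Arguments dleft {S M k m}.
Arguments dright {S M k m}.
Arguments dinl {S M k} m.
Arguments dinr {S M} k {m}.

Section FiniteSigmaRickart.
Variables (S : nzRingType) (M : lmodType S).

(* If M^(k+m) is Rickart, then the kernel of every map M^(k) -> M^(m) is a
   direct summand: it is the image under the first projection of the kernel
   of the endomorphism z |-> (0, f (z_1)) of M^(k+m). *)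
Lemma Rickart_block_kernel k m (f : {linear dsum_pow M k -> dsum_pow M m}) :
  Rickart (dsum_pow M (k + m)) -> is_direct_summand (lker f).
Proof.
move=> HR.
pose psi : {linear dsum_pow M (k + m) -> dsum_pow M (k + m)} := dinr k \o f \o dleft.
apply: (@summand_image _ _ _ dleft _ (lker psi)).
- by move=> a; exists (dinl m a); rewrite /= dleft_inl.
- exact: lker_submodule.
- move=> z; rewrite /lker /=; split=> [fz0 | ->]; last exact: linear0.
  by rewrite -(dright_inr k (f (dleft z))) fz0 linear0.
- exact: HR.
Qed.

Lemma Sigma_Rickart_D2 : finite_Sigma_Rickart M ->
  forall X : lmodType S, in_add M X ->
  forall N : lmodType S, (exists i : {linear N -> X}, injective i) ->
  fin_M_generated M N -> D2 N.
Proof.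
move=> HR X [m [_ [e [e_inj _]]]] N [i i_inj] [k [k_gt0 [g g_onto]]] Y HY.
move=> [Q [q [_ [qY [h [h_inj _]]]]]].
pose f : {linear dsum_pow M k -> dsum_pow M m} := e \o i \o h \o q \o g.
have kerfE z : lker f z <-> Y (g z).
  apply: iff_trans (lin_eq0 _ e_inj) _; apply: iff_trans (lin_eq0 _ i_inj) _.
  exact: iff_trans (lin_eq0 _ h_inj) (iff_sym (qY _)).
have km_gt0 : (0 < k + m)%N by rewrite addn_gt0 k_gt0.
exact: (summand_image g_onto HY kerfE (Rickart_block_kernel f (HR _ km_gt0))).
Qed.

End FiniteSigmaRickart.

Section GraphModule.
Variables (S : nzRingType) (M : lmodType S) (n : nat).
Variable phi : {linear dsum_pow M n -> dsum_pow M n}.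

Definition in_graph (x : dsum_pow M (n + n)) : Prop := limage phi (dright x).

Lemma in_graph_submodule : is_submodule in_graph.
Proof. exact: preimage_submodule (limage_submodule phi). Qed.

Definition graph_mod : lmodType S := submod in_graph_submodule.
Definition image_mod : lmodType S := submod (limage_submodule phi).

Lemma graph_gen_in z : in_graph (dinl n (dleft z) + dinr n (phi (dright z))).
Proof. by exists (dright z); rewrite linearD /= dright_inl dright_inr add0r. Qed.

Definition graph_gen : {linear dsum_pow M (n + n) -> graph_mod} :=
  corestrict in_graph_submodule
    (f := (dinl n \o dleft) \+ (dinr n \o phi \o dright)) graph_gen_in.

Lemma graph_genE z : val (graph_gen z) = dinl n (dleft z) + dinr n (phi (dright z)).
Proof. exact: corestrictK. Qed.

Lemma graph_gen_onto (y : graph_mod) : exists z, graph_gen z = y.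
Proof.
have [b phib] := submodP y.
exists (dinl n (dleft (val y)) + dinr n b); apply: val_inj.
rewrite graph_genE [dleft _]linearD [dright _]linearD /=.
by rewrite dleft_inl dleft_inr dright_inl dright_inr addr0 add0r phib dsum_decomp.
Qed.

Lemma graph_gen_inl a : dleft (val (graph_gen (dinl n a))) = a.
Proof. by rewrite graph_genE linearD /= !dleft_inl dleft_inr addr0. Qed.

Lemma image_in x : limage phi (phi x).
Proof. by exists x. Qed.

Definition graph_quot : {linear graph_mod -> image_mod} :=
  corestrict (limage_submodule phi) (f := phi \o dleft \o val) (fun y => image_in _).

Lemma graph_quotE y : val (graph_quot y) = phi (dleft (val y)).
Proof. exact: corestrictK. Qed.

Lemma graph_quot_onto (w : image_mod) : exists y, graph_quot y = w.
Proof.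
have [a phia] := submodP w.
by exists (graph_gen (dinl n a)); apply: val_inj; rewrite graph_quotE graph_gen_inl.
Qed.

Lemma graph_quot_ker y : graph_quot y = 0 <-> phi (dleft (val y)) = 0.
Proof. by rewrite -graph_quotE; split=> [-> // | quot0]; exact: val_inj. Qed.

Lemma image_incl_in (w : image_mod) : in_graph (dinr n (val w)).
Proof. by rewrite /in_graph dright_inr; exact: submodP. Qed.

Definition image_incl : {linear image_mod -> graph_mod} :=
  corestrict in_graph_submodule (f := dinr n \o val) image_incl_in.

Definition graph_proj : {linear graph_mod -> image_mod} :=
  corestrict (limage_submodule phi) (f := dright \o val) (@submodP _ _ _ _).

Lemma graph_proj_incl : cancel image_incl graph_proj.
Proof. by move=> w; apply: val_inj; rewrite corestrictK /= dright_inr. Qed.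

Lemma graph_D2_kernel : D2 graph_mod -> is_direct_summand (lker phi).
Proof.
move=> HD2.
have Ysum : is_direct_summand (lker graph_quot).
  apply: HD2; first exact: lker_submodule.
  exists image_mod, graph_quot; split; first exact: graph_quot_onto.
  split=> [y | ]; first exact: iff_refl.
  exists image_incl; split; first exact: can_inj graph_proj_incl.
  exact: split_summand graph_proj_incl.
apply: (summand_image (g := dleft \o val) _ (lker_submodule phi) graph_quot_ker Ysum).
by move=> a; exists (graph_gen (dinl n a)); rewrite /= graph_gen_inl.
Qed.
End GraphModule.

Lemma D2_Sigma_Rickart (S : nzRingType) (M : lmodType S) :
  (forall X : lmodType S, in_add M X ->
   forall N : lmodType S, (exists i : {linear N -> X}, injective i) ->
   fin_M_generated M N -> D2 N) ->
  finite_Sigma_Rickart M.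
Proof.
move=> HD2 n n_gt0 phi; apply: graph_D2_kernel.
have nn_gt0 : (0 < n + n)%N by rewrite addn_gt0 n_gt0.
apply: (HD2 (dsum_pow M (n + n))).
- by exists (n + n)%N; split; last exact: iso_to_direct_summand_refl.
- by exists val; exact: val_inj.
- by exists (n + n)%N; split; last by exists (graph_gen phi); exact: graph_gen_onto.
Qed.

Theorem mainTheorem4 (R : nzRingType) (M : lmodType R^c) :
  finite_Sigma_Rickart M <->
  (forall X : lmodType R^c, in_add M X ->
     forall N : lmodType R^c,
       (exists i : {linear N -> X}, injective i) ->
       fin_M_generated M N -> D2 N).
Proof. by split; [exact: Sigma_Rickart_D2 | exact: D2_Sigma_Rickart]. Qed.
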